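(* Let $K=(K_{xy})$ be a real $n\times n$ matrix and define the matrix $\mathcal D=(d_{xy})$ by $$\mathcal D=\tfrac12\big(\operatorname{diag}(K)\cdot\mathbf 1^T+\mathbf 1\cdot\operatorname{diag}(K)^T\big)-K,$$ i.e. $d_{xy}=\tfrac12(K_{xx}+K_{yy})-K_{xy}$, where $\operatorname{diag}(K)$ is the column vector of diagonal entries of $K$ and $\mathbf 1=(1,\dots,1)^T$. If $\mathcal D$ has a negative entry, or if $\sqrt{d_{xy}}+\sqrt{d_{yz}}<\sqrt{d_{xz}}$ for some $x,y,z\in\{1,\dots,n\}$, then the function $\kappa(x,y)=K_{xy}$, $x,y\in\{1,\dots,n\}$, is not a proximity on $\{1,\dots,n\}$.
   Context: A proximity measure (proximity) on a set $A$ is a function $\kappa:A\times A\to\mathbb R$ satisfying the triangle inequality for proximities: for all $x,y,z\in A$, $\kappa(x,y)+\kappa(x,z)-\kappa(y,z)\le\kappa(x,x)$, and if $z=y$ and $y\neq x$ then this inequality is strict. *)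

From mathcomp Require Import all_boot all_order all_algebra.
Set Implicit Arguments. Unset Strict Implicit. Unset Printing Implicit Defensive.
Import Order.TTheory GRing.Theory Num.Theory.
Local Open Scope ring_scope.

Definition is_proximity (R : realFieldType) (A : Type) (kappa : A -> A -> R) : Prop :=
  (forall x y z : A, kappa x y + kappa x z - kappa y z <= kappa x x) /\
  (forall x y : A, y <> x -> kappa x y + kappa x y - kappa y y < kappa x x).

Definition Dmx (R : realFieldType) (n : nat) (K : 'M[R]_n) : 'M[R]_n :=
  2^-1 *: (\matrix_(i, j) K i i *m (const_mx 1 : 'M[R]_(1, n))
           + (const_mx 1 : 'M[R]_(n, 1)) *m \matrix_(i, j) K j j) - K.

From mathcomp Require Import all_boot all_order all_algebra.
From mathcomp Require Import lra.
Set Implicit Arguments. Unset Strict Implicit. Unset Printing Implicit Defensive.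
Import Order.TTheory GRing.Theory Num.Theory.
Local Open Scope ring_scope.

(* A proximity is symmetric (apply its triangle inequality at (x, y, x) and at
   (y, x, y)), so its triangle inequality at (y, x, z) is exactly the triangle
   inequality for d(x, y) = (k(x, x) + k(y, y)) / 2 - k(x, y), and its strict
   part makes d nonnegative.  Square roots are subadditive, so sqrt d is again
   a semimetric: neither failure in the hypothesis can occur. *)

Definition prox_dist {R : realFieldType} {A : Type} (kappa : A -> A -> R)
    (x y : A) : R :=
  2^-1 * (kappa x x + kappa y y) - kappa x y.

Lemma DmxE (R : realFieldType) n (K : 'M[R]_n) x y :
  Dmx K x y = prox_dist (fun i j => K i j) x y.
Proof. by rewrite /Dmx /prox_dist !mxE !big_ord1 !mxE !mulr1 !mul1r. Qed.

Lemma sqrtrD_le (R : rcfType) (a b : R) : 0 <= a -> 0 <= b ->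
  Num.sqrt (a + b) <= Num.sqrt a + Num.sqrt b.
Proof.
move=> a0 b0; rewrite -[leRHS]ger0_norm ?addr_ge0 ?sqrtr_ge0 // -sqrtr_sqr.
apply: ler_wsqrtr; rewrite sqrrD !sqr_sqrtr // addrAC lerDl.
by rewrite mulrn_wge0 // mulr_ge0 // sqrtr_ge0.
Qed.

Section ProximityDistance.

Variables (R : realFieldType) (A : Type) (kappa : A -> A -> R).
Hypothesis prox : is_proximity kappa.

Lemma proximity_sym x y : kappa x y = kappa y x.
Proof.
case: prox => tri _; have := tri x y x; have := tri y x y.
by move=> hyx hxy; apply/eqP; rewrite eq_le; apply/andP; split; lra.
Qed.

Lemma prox_dist_ge0 x y : 0 <= prox_dist kappa x y.
Proof.
rewrite leNgt; apply/negP => neg.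
have yx : y <> x by move=> eyx; move: neg; rewrite eyx /prox_dist; lra.
by have := prox.2 x y yx; move: neg; rewrite /prox_dist; lra.
Qed.

Lemma prox_dist_triangle x y z :
  prox_dist kappa x z <= prox_dist kappa x y + prox_dist kappa y z.
Proof. by rewrite /prox_dist; have := prox.1 y x z; rewrite (proximity_sym y x); lra. Qed.

End ProximityDistance.

Lemma prox_dist_sqrt_triangle (R : rcfType) (A : Type) (kappa : A -> A -> R) x y z :
  is_proximity kappa ->
  Num.sqrt (prox_dist kappa x z) <=
    Num.sqrt (prox_dist kappa x y) + Num.sqrt (prox_dist kappa y z).
Proof.
move=> prox.
have sqrt_le := sqrtrD_le (prox_dist_ge0 prox x y) (prox_dist_ge0 prox y z).
exact/(le_trans _ sqrt_le)/ler_wsqrtr/prox_dist_triangle.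
Qed.

Theorem corollary1 (R : rcfType) (n : nat) (K : 'M[R]_n) :
  ((exists x y : 'I_n, Dmx K x y < 0) \/
   (exists x y z : 'I_n,
      Num.sqrt (Dmx K x y) + Num.sqrt (Dmx K y z) < Num.sqrt (Dmx K x z))) ->
  ~ is_proximity (fun x y : 'I_n => K x y).
Proof.
move=> [[x [y]] | [x [y [z]]]] + prox; rewrite !DmxE; apply/negP; rewrite -leNgt.
- exact: prox_dist_ge0.
- exact: prox_dist_sqrt_triangle.
Qed.
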